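(* Let $(X^4,\gamma)=(I\times M^3, -N^2 dt^2+g)$ be a globally hyperbolic spacetime written in the form described in the context. Then: (1) for every $t\in I$, every $x\in M$ and every tangent vector $V\in T_xM$ (with components $V^i$ in local coordinates on $M$), $$\frac{1}{2N^2}\left(\partial^2_{tt} g_{ij} V^i V^j+2h_{ij}V^i V^j\partial_t N\right)\leq [1-q(t)]\frac{|h_{ij}V^i V^j|^2}{g(V,V)}\quad\text{at }(t,x);$$ (2) for $t_0\in I$, the leaf $M_{t_0}$ is energy-decelerating in all directions if and only if, at $t=t_0$ and at every point of $M$, $$\partial^2_{tt} g_{ij} +2h_{ij}\partial_t N\leq 0$$ in the sense of quadratic forms.
   Context: $I\subset\mathbb{R}$ is an interval, $M^3$ a smooth three-manifold without boundary, $N=N(t,x)>0$ the lapse function and $g=g_{ij}(t,x)dx^idx^j$ a $t$-dependent Riemannian metric on $M$ (the first fundamental form of the leaves $M_t=\{t\}\times M$). Set $\overline{\partial}_t=\frac1N\partial_t$. The second fundamental form of the foliation is $h_{ij}=-\frac{1}{2N}\partial_t g_{ij}$. For $V\in T_xM$ (viewed as fixed, independent of $t$), write $|V|=\sqrt{g(V,V)}$, a function of $t$. The deceleration parameter is $$q(t):=\inf \Big\{q\in\mathbb R: \big(\overline{\partial}^2_{tt} |V|\big)\, |V|\leq -q \left(\overline{\partial}_t |V|\right)^2 \text{ at }(t,x),\ \forall x\in M,\ \forall V\in T_xM\Big\}.$$ The leaf $M_{t_0}$ is called energy-decelerating in all directions if for every smooth curve $\sigma:J\subset\mathbb{R}\to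 M$, $$\int_{\sigma} \overline{\partial}^2_{tt}|\dot\sigma|^2\Big|_{t=t_0} \leq 0,$$ where $|\dot\sigma|^2=g(\dot\sigma,\dot\sigma)$ and the integral is over the parameter of $\sigma$. *)

From HB Require Import structures.
From mathcomp Require Import all_boot all_order all_algebra.
From mathcomp Require Import all_classical all_reals all_analysis.
Set Implicit Arguments. Unset Strict Implicit. Unset Printing Implicit Defensive.
Import Order.TTheory GRing.Theory Num.Theory.
Import numFieldNormedType.Exports.
Local Open Scope classical_set_scope.
Local Open Scope ring_scope.

Section Defs.
Variable R : realType.

Fixpoint dder {V W : normedModType R} (vs : seq V) (f : V -> W) : V -> W :=
  match vs with
  | [::] => f
  | v :: vs' => fun p => derive (dder vs' f) p v
  end.

Definition smooth_on {V W : normedModType R} (U : set V) (f : V -> W) :=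
  open U /\
  forall (vs : seq V) (p : V), U p ->
    (forall v, derivable (dder vs f) p v) /\ {for p, continuous (dder vs f)}.

Record smooth_manifold3 (M : Type) := {
  chart_idx : Type;
  cdom : chart_idx -> set M;
  phi : chart_idx -> M -> 'rV[R]_3;
  psi : chart_idx -> 'rV[R]_3 -> M;
  charts_cover : forall x, exists a, cdom a x;
  psi_phi : forall a x, cdom a x -> psi a (phi a x) = x;
  phi_psi : forall a y, (phi a @` cdom a) y -> cdom a (psi a y) /\ phi a (psi a y) = y;
  overlap_open : forall a b, open (phi a @` (cdom a `&` cdom b));
  transition_smooth : forall a b,
    smooth_on (phi a @` (cdom a `&` cdom b)) (fun y => phi b (psi a y))
}.

Variable M : Type.
Variable A : smooth_manifold3 M.

Definition quad (G : 'M[R]_3) (v : 'rV[R]_3) : R :=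
  \sum_(i < 3) \sum_(j < 3) G i j * v 0 i * v 0 j.

(* Data of the spacetime (I x M, -N^2 dt^2 + g): I an (open) interval,
   N : I x M -> R positive lapse, g given by its components g a t y
   in each chart a (y = phi a x), smooth, symmetric, positive definite,
   and transforming as a (0,2)-tensor under chart changes. *)
Definition lorentz_data (I : set R) (N : R -> M -> R)
  (g : chart_idx A -> R -> 'rV[R]_3 -> 'M[R]_3) :=
  [/\ is_interval I /\ open I /\ I !=set0,
      (forall t x, I t -> 0 < N t x),
      (forall a : chart_idx A, smooth_on (I `*` (phi a @` cdom a))
                           (fun p : R * 'rV[R]_3 => N p.1 (psi a p.2))),
      (forall (a : chart_idx A) i j, smooth_on (I `*` (phi a @` cdom a))
                           (fun p : R * 'rV[R]_3 => g a p.1 p.2 i j)) &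
     [/\ (forall (a : chart_idx A) t y i j, I t -> (phi a @` cdom a) y -> g a t y i j = g a t y j i),
      (forall (a : chart_idx A) t y (v : 'rV[R]_3), I t -> (phi a @` cdom a) y -> v != 0 -> 0 < quad (g a t y) v) &
      (forall (a b : chart_idx A) t x (v : 'rV[R]_3), I t -> cdom a x -> cdom b x ->
         quad (g a t (phi a x)) v =
         quad (g b t (phi b x)) (derive (fun y => phi b (psi a y)) (phi a x) v))]].

Definition dt_g (g : chart_idx A -> R -> 'rV[R]_3 -> 'M[R]_3) a t y : 'M[R]_3 :=
  \matrix_(i, j) derive1 (fun s => g a s y i j) t.
Definition dtt_g (g : chart_idx A -> R -> 'rV[R]_3 -> 'M[R]_3) a t y : 'M[R]_3 :=
  \matrix_(i, j) derive1n 2 (fun s => g a s y i j) t.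
Definition dt_N (N : R -> M -> R) t x : R := derive1 (fun s => N s x) t.

Definition sff (N : R -> M -> R) (g : chart_idx A -> R -> 'rV[R]_3 -> 'M[R]_3) (a : chart_idx A) t x : 'M[R]_3 :=
  (- (2 * N t x)^-1) *: dt_g g a t (phi a x).

Definition dbar (N : R -> M -> R) (x : M) (f : R -> R) : R -> R :=
  fun t => (N t x)^-1 * derive1 f t.

Definition vnorm (g : chart_idx A -> R -> 'rV[R]_3 -> 'M[R]_3) (a : chart_idx A) (x : M) (v : 'rV[R]_3) : R -> R :=
  fun t => Num.sqrt (quad (g a t (phi a x)) v).

(* q is admissible in the definition of the deceleration parameter at t:
   (bar-d_tt |V|) |V| <= - q (bar-d_t |V|)^2 at (t,x) for all x, V *)
Definition decel_admissible (N : R -> M -> R) (g : chart_idx A -> R -> 'rV[R]_3 -> 'M[R]_3) (t q : R) :=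
  forall (a : chart_idx A) x (v : 'rV[R]_3), cdom a x ->
    dbar N x (dbar N x (vnorm g a x v)) t * vnorm g a x v t
      <= - q * (dbar N x (vnorm g a x v) t) ^+ 2.

Definition smooth_curve (J : set R) (sigma : R -> M) :=
  exists O : set R, [/\ open O, J `<=` O &
    forall s, O s -> exists (a : chart_idx A) (W : set R),
      [/\ cdom a (sigma s), open W /\ W s, W `<=` O,
          sigma @` W `<=` cdom a &
          smooth_on W (fun r : R => phi a (sigma r))]].

Definition curve_sqspeed (g : chart_idx A -> R -> 'rV[R]_3 -> 'M[R]_3) (a : chart_idx A) (sigma : R -> M) (s : R) : R -> R :=
  fun t => quad (g a t (phi a (sigma s)))
                (derive (fun r : R => phi a (sigma r)) s 1).

(* M_{t0} is energy-decelerating in all directions: for every smooth curve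
   sigma on an interval J, int_J bar-d_tt |sigma'|^2 (t0) ds <= 0; the
   integrand e is characterised by its value in any chart containing sigma s *)
Definition energy_decelerating (N : R -> M -> R) (g : chart_idx A -> R -> 'rV[R]_3 -> 'M[R]_3) (t0 : R) :=
  forall (J : set R) (sigma : R -> M) (e : R -> R),
    is_interval J -> smooth_curve J sigma ->
    (forall s (a : chart_idx A), J s -> cdom a (sigma s) ->
       e s = dbar N (sigma s) (dbar N (sigma s) (curve_sqspeed g a sigma s)) t0) ->
    (\int[@lebesgue_measure R]_(s in J) (e s)%:E <= 0)%E.

End Defs.

From HB Require Import structures.
From mathcomp Require Import all_boot all_order all_algebra.
From mathcomp Require Import all_classical all_reals all_analysis.
From mathcomp Require Import ring lra.
Set Implicit Arguments. Unset Strict Implicit. Unset Printing Implicit Defensive.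
Import Order.TTheory GRing.Theory Num.Theory.
Import numFieldNormedType.Exports.
Local Open Scope classical_set_scope.
Local Open Scope ring_scope.

(* Everything is one-variable calculus in the time variable at a fixed point of a
   chart.  For f(t) = g_t(V,V) one has d̄_t f = -2 h(V,V) and
     d̄_tt f = N^-2 (f'' - (∂_t N) f' / N) = N^-2 (∂_tt g + 2 h ∂_t N)(V,V),
   and differentiating |V|^2 = f twice gives
     (d̄_tt |V|) |V| = d̄_tt f / 2 - (d̄_t |V|)^2,   d̄_t |V| = - h(V,V) / |V|,
   so the inequality defining q(t) is exactly (1).
   In (2) the energy density of a curve σ is d̄_tt f for V = σ', hence nonpositive
   under the quadratic-form condition.  Conversely, if that form is positive on some V
   at x, then by continuity the density stays above a positive constant along the
   chart segment s ↦ x + s V for small |s|, whose energy is therefore positive. *)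

Section QuadraticForm.
Variable R : realType.
Implicit Types (F G : 'M[R]_3) (w : 'rV[R]_3).

Lemma quadD F G w : quad (F + G) w = quad F w + quad G w.
Proof.
rewrite /quad -big_split; apply: eq_bigr => i _; rewrite -big_split.
by apply: eq_bigr => j _; rewrite mxE !mulrDl.
Qed.

Lemma quadZ c F w : quad (c *: F) w = c * quad F w.
Proof.
rewrite /quad mulr_sumr; apply: eq_bigr => i _; rewrite mulr_sumr.
by apply: eq_bigr => j _; rewrite mxE !mulrA.
Qed.

Lemma quad0 F : quad F 0 = 0.
Proof.
rewrite /quad; apply: big1 => i _; apply: big1 => j _.
by rewrite (_ : (0 : 'rV[R]_3) 0 j = 0) ?mulr0 // mxE.
Qed.

Lemma quad_sum_fun {T : Type} (F : T -> 'M[R]_3) w :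
  (fun p => quad (F p) w) =
  \sum_(i < 3) \sum_(j < 3) (fun p => F p i j * w 0 i * w 0 j).
Proof.
apply/funext => p; rewrite /quad fct_sumE; apply: eq_bigr => i _.
by rewrite fct_sumE.
Qed.

Lemma continuous_quad {T : topologicalType} (F : T -> 'M[R]_3) w p :
  (forall i j, {for p, continuous (fun q => F q i j)}) ->
  {for p, continuous (fun q => quad (F q) w)}.
Proof.
move=> cF; rewrite quad_sum_fun.
apply: (big_ind (fun f : T -> R => {for p, continuous f})) => [|f1 f2|i _].
- exact: cst_continuous.
- exact: continuousD.
apply: (big_ind (fun f : T -> R => {for p, continuous f})) => [|f1 f2|j _].
- exact: cst_continuous.
- exact: continuousD.
by apply: continuousM; [apply: continuousM|]; [|exact: cst_continuous..].
Qed.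

Lemma is_derive_quad (F : R -> 'M[R]_3) (dF : 'M[R]_3) w (t : R) :
  (forall i j, is_derive t 1 (fun s => F s i j) (dF i j)) ->
  is_derive t 1 (fun s => quad (F s) w) (quad dF w).
Proof.
move=> dFij; rewrite quad_sum_fun.
apply: is_derive_sum => i; apply: is_derive_sum => j.
have := is_deriveM (is_deriveM (dFij i j) (is_derive_cst (w 0 i) t 1))
  (is_derive_cst (w 0 j) t 1).
by move=> /is_derive_eq; apply; rewrite !scaler0 !add0r /GRing.scale /=; ring.
Qed.

End QuadraticForm.

Lemma is_derive_sqrt_comp (R : realType) (f : R -> R) (t df : R) :
  0 < f t -> is_derive t 1 f df ->
  is_derive t 1 (fun s => Num.sqrt (f s)) (df / (2 * Num.sqrt (f t))).
Proof.
move=> ft0 df_t; apply: is_derive_eq.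
  exact: (is_derive1_comp (is_derive1_sqrt ft0) df_t).
by rewrite mulrC.
Qed.

Section BarDerivative.
Variables (R : realType) (M : Type) (N : R -> M -> R) (x : M).

Lemma dbar_val (f : R -> R) (t df : R) : is_derive t 1 f df ->
  dbar N x f t = (N t x)^-1 * df.
Proof. by move=> hf; rewrite /dbar derive1E derive_val. Qed.

Lemma dbar_dbarE (f f' : R -> R) (t f'' : R) :
  derivable (fun s => N s x) t 1 -> N t x != 0 ->
  (\forall s \near t, is_derive (s : R) 1 f (f' s)) -> is_derive t 1 f' f'' ->
  dbar N x (dbar N x f) t = (N t x)^-2 * (f'' - dt_N N t x * f' t / N t x).
Proof.
move=> dN N0 df df'.
have dbar_near : \forall s \near t, dbar N x f s = (N s x)^-1 * f' s.
  by apply: filterS df => s /dbar_val.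
rewrite {1}/dbar derive1E (near_eq_derive _ dbar_near).
have hd := is_deriveM (is_deriveV N0 (derivableP dN)) df'.
by rewrite derive_val /dt_N derive1E /GRing.scale /=; field.
Qed.

Lemma dbar_dbar_sqrt (f f' : R -> R) (t f'' : R) :
  derivable (fun s => N s x) t 1 -> N t x != 0 ->
  (\forall s \near t, 0 < f s /\ is_derive (s : R) 1 f (f' s)) ->
  is_derive t 1 f' f'' ->
  let S := fun s => Num.sqrt (f s) in
  dbar N x (dbar N x S) t * S t = dbar N x (dbar N x f) t / 2 - (dbar N x S t) ^+ 2.
Proof.
move=> dN N0 hf df' S.
have dS : \forall s \near t, is_derive (s : R) 1 S (f' s / (2 * S s)).
  by apply: filterS hf => s [fs0 dfs]; exact: is_derive_sqrt_comp.
have df : \forall s \near t, is_derive (s : R) 1 f (f' s).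
  by apply: filterS hf => s [].
have [ft0 dft] : 0 < f t /\ is_derive t 1 f (f' t) := nbhs_singleton hf.
have St0 : S t != 0 by rewrite gt_eqF // sqrtr_gt0.
have S20 : 2 * S t != 0 by rewrite mulf_neq0.
have dS' := is_deriveM df' (is_deriveV (f := fun s => 2 * S s) S20
  (is_deriveZ 2 (is_derive_sqrt_comp ft0 dft))).
rewrite (dbar_dbarE dN N0 dS dS') (dbar_dbarE dN N0 df df').
rewrite (dbar_val (nbhs_singleton dS)) /GRing.scale /= -/(S t).
by field; rewrite St0 N0.
Qed.

Lemma near_eq_dbar_dbar (f1 f2 : R -> R) (t : R) :
  (\forall s \near t, f1 s = f2 s) ->
  dbar N x (dbar N x f1) t = dbar N x (dbar N x f2) t.
Proof.
move=> e; rewrite /dbar !derive1E; congr (_ * _); apply: near_eq_derive.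
apply: filterS (nbhs_interior e) => s es; congr (_ * _); rewrite !derive1E.
exact: near_eq_derive.
Qed.

End BarDerivative.

Section TimeSlices.
Variables (R : realType) (n : nat) (W : normedModType R).
Local Notation e1 := ((1 : R), (0 : 'rV[R]_n)).
Implicit Types (F : R * 'rV[R]_n -> W) (t : R) (y : 'rV[R]_n).

Lemma time_quotient F t y :
  (fun h : R => h^-1 *: (F (h *: e1 + (t, y)) - F (t, y))) =
  (fun h : R => h^-1 *: ((fun s => F (s, y)) (h *: 1 + t) - F (t, y))).
Proof.
apply/funext => h /=; congr (_ *: (F _ - _)).
rewrite [h *: _]/GRing.scale /= /scale_pair /= scaler0.
by rewrite [_ + _]/GRing.add /= /add_pair /= add0r.
Qed.

Lemma derive_time F t y : 'D_e1 F (t, y) = derive1 (fun s => F (s, y)) t.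
Proof. by rewrite derive1E /derive time_quotient. Qed.

Lemma derivable_time F t y :
  derivable F (t, y) e1 <-> derivable (fun s => F (s, y)) t 1.
Proof. by rewrite /derivable time_quotient. Qed.

Variable D : set (R * 'rV[R]_n).

Lemma is_derive_time_dder F vs t y : smooth_on D F -> D (t, y) ->
  is_derive t 1 (fun s => dder vs F (s, y)) (dder (e1 :: vs) F (t, y)).
Proof.
move=> [_ smF] Dty; rewrite /= derive_time derive1E.
by apply: derivableP; apply/derivable_time; exact: (smF vs _ Dty).1.
Qed.

Lemma continuous_space_dder F vs t y : smooth_on D F -> D (t, y) ->
  {for y, continuous (fun z => dder vs F (t, z))}.
Proof.
move=> [_ smF] Dty; apply: (continuous_comp (f := pair t)).
  by apply: (cvg_pair (cvg_cst t) cvg_id); apply: nbhs_filter.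
exact: (smF vs _ Dty).2.
Qed.

End TimeSlices.

Section Lines.
Variables (R : realType) (V W : normedModType R) (v y : V).
Local Notation line := (fun r : R => r *: v + y).

Lemma derive_along_line (F : V -> W) (s : R) :
  'D_1 (fun r : R => F (r *: v + y)) s = 'D_v F (s *: v + y).
Proof.
have shift :
    (fun h : R => h^-1 *: ((fun r : R => F (r *: v + y)) (h *: 1 + s) - F (s *: v + y)))
  = (fun h : R => h^-1 *: (F (h *: v + (s *: v + y)) - F (s *: v + y))).
  by apply/funext => h /=; rewrite [h *: 1]mulr1 scalerDl addrA.
by rewrite /derive shift.
Qed.

Lemma is_diff_line (p : R) : is_diff p line (( *:%R^~ v) + 0).
Proof. exact: is_diffD. Qed.

Lemma dder_line u vs : dder (u :: vs) line = cst (if vs is [::] then u *: v else 0).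
Proof.
elim: vs u => [|u' vs IH] u; apply/funext => p.
  by rewrite /= deriveE ?diff_val /= ?addr0 //; case: (is_diff_line p).
by transitivity ('D_u (dder (u' :: vs) line) p); rewrite // IH derive_cst.
Qed.

Lemma continuous_line : continuous line.
Proof. by move=> p; have [dl _] := is_diff_line p; exact: differentiable_continuous. Qed.

Lemma smooth_on_line (O : set R) : open O -> smooth_on O line.
Proof.
move=> oO; split => // -[|u vs] p _; last first.
  by rewrite dder_line; split; [move=> w; exact: derivable_cst | exact: cst_continuous].
have [dl _] := is_diff_line p.
by split; [move=> w; exact: diff_derivable | exact: continuous_line].
Qed.

End Lines.

Lemma dder_eq_on_open (R : realType) (V W : normedModType R) (O : set V)
    (f g : V -> W) :
  open O -> (forall p, O p -> f p = g p) ->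
  forall vs p, O p -> dder vs f p = dder vs g p.
Proof.
move=> oO fg; elim=> [|u vs IH] p Op /=; first exact: fg.
apply: near_eq_derive; apply: filterS (open_nbhs_nbhs (conj oO Op)) => q Oq.
exact: IH.
Qed.

Lemma smooth_on_eq (R : realType) (V W : normedModType R) (O : set V)
    (f g : V -> W) :
  (forall p, O p -> f p = g p) -> smooth_on O f -> smooth_on O g.
Proof.
move=> fg [oO smf]; split => // vs p Op.
have fg_near : {near p, dder vs f =1 dder vs g}.
  apply: filterS (open_nbhs_nbhs (conj oO Op)) => q.
  exact: dder_eq_on_open oO fg vs q.
have [df cf] := smf vs p Op.
split; first by move=> u; exact: near_eq_derivable fg_near (df u).
by apply: cvg_trans (near_eq_cvg fg_near) _; rewrite -(dder_eq_on_open oO fg).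
Qed.

Section Integrals.
Local Open Scope ereal_scope.
Context d (T : measurableType d) (R : realType) (mu : {measure set T -> \bar R}).

(* The energy density of a curve is not known to be measurable. *)
Lemma ge0_le_integral_nonmeasurable (D : set T) (f1 f2 : T -> \bar R) :
  (forall x, D x -> 0 <= f1 x) -> (forall x, D x -> f1 x <= f2 x) ->
  \int[mu]_(x in D) f1 x <= \int[mu]_(x in D) f2 x.
Proof.
move=> f1_ge0 f12.
have f2_ge0 x : D x -> 0 <= f2 x by move=> Dx; exact: le_trans (f1_ge0 x Dx) (f12 x Dx).
rewrite ge0_integralE // [leRHS]ge0_integralE //=.
apply: ereal_sup_le => _ [h /= hf1 <-]; exists h => //= x.
apply: le_trans (hf1 x) _; rewrite /patch; case: ifP => // /set_mem Dx.
exact: f12.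
Qed.

Lemma integral_le0 (D : set T) (f : T -> R) :
  (forall x, D x -> f x <= 0)%R -> \int[mu]_(x in D) (f x)%:E <= 0.
Proof.
move=> f_le0; have -> : (fun x => (f x)%:E) = (fun x => - (- f x)%:E).
  by apply/funext => x; rewrite EFinN oppeK.
rewrite integral_ge0N => [|x Dx]; last by rewrite lee_fin oppr_ge0 f_le0.
by rewrite oppe_le0; apply: integral_ge0 => x Dx; rewrite lee_fin oppr_ge0 f_le0.
Qed.

End Integrals.

Lemma integral_ball_gt0 (R : realType) (x eps c : R) (f : R -> R) :
  0 < eps -> 0 < c -> (forall s, ball x eps s -> c <= f s) ->
  (0 < \int[@lebesgue_measure R]_(s in ball x eps) (f s)%:E)%E.
Proof.
move=> eps_gt0 c_gt0 cf.
apply: (@lt_le_trans _ _ (\int[lebesgue_measure]_(s in ball x eps) (cst c%:E) s)%E).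
  rewrite integral_cst; last exact: measurable_realfun.measurable_ball.
  rewrite [X in (_ * X)%E](lebesgue_measure_ball x (ltW eps_gt0)) -EFinM lte_fin.
  by rewrite mulr_gt0 // mulrn_wgt0.
apply: ge0_le_integral_nonmeasurable => s Bs; rewrite lee_fin.
  exact: ltW.
exact: cf.
Qed.

Section Spacetime.
Variables (R : realType) (M : Type) (A : smooth_manifold3 R M) (I : set R)
  (N : R -> M -> R) (g : chart_idx A -> R -> 'rV[R]_3 -> 'M[R]_3).
Hypothesis HL : lorentz_data I N g.
Implicit Types (a b : chart_idx A) (x : M) (t s : R) (v y z : 'rV[R]_3).

Local Notation e1 := ((1 : R), (0 : 'rV[R]_3)).
Let U a := phi a @` cdom a.
Let G a (i j : 'I_3) (p : R * 'rV[R]_3) : R := g a p.1 p.2 i j.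
Let Nc a (p : R * 'rV[R]_3) : R := N p.1 (psi a p.2).

Lemma open_time : open I. Proof. by case: HL => -[_ []]. Qed.

Lemma near_time t : I t -> \forall s \near t, I s.
Proof. by move=> It; apply: open_nbhs_nbhs; split; [exact: open_time|]. Qed.

Lemma lapse_gt0 t x : I t -> 0 < N t x.
Proof. by case: HL => _ N_gt0 _ _ _; exact: N_gt0. Qed.

Lemma lapse_neq0 t x : I t -> N t x != 0.
Proof. by move=> It; rewrite gt_eqF // lapse_gt0. Qed.

Lemma open_chart a : open (U a).
Proof. by have := @overlap_open _ _ A a a; rewrite setIid. Qed.

Lemma chart_image a x : cdom a x -> U a (phi a x). Proof. by exists x. Qed.

Lemma smooth_metric a i j : smooth_on (I `*` U a) (G a i j).
Proof. by case: HL => _ _ _ smooth_g _; exact: smooth_g. Qed.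

Lemma smooth_lapse a : smooth_on (I `*` U a) (Nc a).
Proof. by case: HL => _ _ smooth_N _ _; exact: smooth_N. Qed.

Lemma dt_g_dder a t z i j : dt_g g a t z i j = dder [:: e1] (G a i j) (t, z).
Proof. by rewrite mxE /= derive_time. Qed.

Lemma dtt_g_dder a t z i j : dtt_g g a t z i j = dder [:: e1; e1] (G a i j) (t, z).
Proof.
rewrite mxE /= derive_time; congr (derive1 _ t); apply/funext => s.
by rewrite derive_time.
Qed.

Lemma dt_N_dder a t z : dt_N N t (psi a z) = dder [:: e1] (Nc a) (t, z).
Proof. by rewrite /= derive_time. Qed.

Lemma is_derive_metric a v t z : I t -> U a z ->
  is_derive t 1 (fun s => quad (g a s z) v) (quad (dt_g g a t z) v).
Proof.
move=> It Uz; apply: is_derive_quad => i j; rewrite dt_g_dder.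
exact: (is_derive_time_dder [::] (smooth_metric a i j) (conj It Uz)).
Qed.

Lemma is_derive_dt_metric a v t z : I t -> U a z ->
  is_derive t 1 (fun s => quad (dt_g g a s z) v) (quad (dtt_g g a t z) v).
Proof.
move=> It Uz; apply: is_derive_quad => i j; rewrite dtt_g_dder.
have -> : (fun s => dt_g g a s z i j) = (fun s => dder [:: e1] (G a i j) (s, z)).
  by apply/funext => s; rewrite dt_g_dder.
exact: (is_derive_time_dder [:: e1] (smooth_metric a i j) (conj It Uz)).
Qed.

Lemma derivable_lapse a x t : cdom a x -> I t -> derivable (fun s => N s x) t 1.
Proof.
move=> ax It.
have [] := is_derive_time_dder [::] (smooth_lapse a) (conj It (chart_image ax)).
by rewrite /Nc /= psi_phi.
Qed.

Definition dbar2_quad_chart a v t z :=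
  N t (psi a z) ^- 2 * (quad (dtt_g g a t z) v
    - dt_N N t (psi a z) * quad (dt_g g a t z) v / N t (psi a z)).

Lemma dbar_dbar_quad a x v t : cdom a x -> I t ->
  dbar N x (dbar N x (fun s => quad (g a s (phi a x)) v)) t =
  dbar2_quad_chart a v t (phi a x).
Proof.
move=> ax It; rewrite /dbar2_quad_chart psi_phi //.
apply: dbar_dbarE (derivable_lapse ax It) (lapse_neq0 x It) _
  (is_derive_dt_metric v It (chart_image ax)).
by apply: filterS (near_time It) => s Is; exact: is_derive_metric (chart_image ax).
Qed.

Lemma dbar2_quad_chart_sff a x v t : cdom a x -> I t ->
  dbar2_quad_chart a v t (phi a x) =
  N t x ^- 2 * quad (dtt_g g a t (phi a x) + 2 * dt_N N t x *: sff N g a t x) v.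
Proof.
move=> ax It; rewrite /dbar2_quad_chart psi_phi // quadD quadZ /sff quadZ.
by field; rewrite lapse_neq0.
Qed.

Lemma continuous_dbar2_quad_chart a v t z : I t -> U a z ->
  {for z, continuous (dbar2_quad_chart a v t)}.
Proof.
move=> It Uz; have Dtz : (I `*` U a) (t, z) := conj It Uz.
have cN : {for z, continuous (fun w => N t (psi a w))}.
  exact: (continuous_space_dder (vs := [::]) (smooth_lapse a) Dtz).
have cNt : {for z, continuous (fun w => dt_N N t (psi a w))}.
  have -> : (fun w => dt_N N t (psi a w)) = (fun w => dder [:: e1] (Nc a) (t, w)).
    by apply/funext => w; rewrite dt_N_dder.
  exact: (continuous_space_dder (vs := [:: e1]) (smooth_lapse a) Dtz).
have cQt : {for z, continuous (fun w => quad (dt_g g a t w) v)}.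
  apply: continuous_quad => i j.
  have -> : (fun w => dt_g g a t w i j) = (fun w => dder [:: e1] (G a i j) (t, w)).
    by apply/funext => w; rewrite dt_g_dder.
  exact: (continuous_space_dder (vs := [:: e1]) (smooth_metric a i j) Dtz).
have cQtt : {for z, continuous (fun w => quad (dtt_g g a t w) v)}.
  apply: continuous_quad => i j.
  have -> : (fun w => dtt_g g a t w i j) = (fun w => dder [:: e1; e1] (G a i j) (t, w)).
    by apply/funext => w; rewrite dtt_g_dder.
  exact: (continuous_space_dder (vs := [:: e1; e1]) (smooth_metric a i j) Dtz).
have N0 : N t (psi a z) != 0 := lapse_neq0 _ It.
apply: continuousM.
  by apply: continuousV; [rewrite expf_neq0 | exact: (continuousM cN cN)].
apply: continuousB cQtt _; apply: continuousM; first exact: (continuousM cNt cQt).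
exact: (continuousV N0 cN).
Qed.

Lemma deceleration_bound t q a x v : I t -> decel_admissible N g t q -> cdom a x ->
  (2 * N t x ^+ 2)^-1 *
    (quad (dtt_g g a t (phi a x)) v + 2 * quad (sff N g a t x) v * dt_N N t x)
  <= (1 - q) * (quad (sff N g a t x) v) ^+ 2 / quad (g a t (phi a x)) v.
Proof.
move=> It adm ax; have [->|v0] := eqVneq v 0.
  by rewrite !quad0 !(mul0r, mulr0, add0r, expr0n, invr0).
set y := phi a x; set f := fun s => quad (g a s y) v.
have Uy : U a y := chart_image ax.
have f_near : \forall s \near t, 0 < f s /\ is_derive (s : R) 1 f (quad (dt_g g a s y) v).
  apply: filterS (near_time It) => s Is; split; last exact: is_derive_metric.
  by case: HL => _ _ _ _ [_ pos_def _]; exact: pos_def.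
have [ft_gt0 dft] := nbhs_singleton f_near.
have := adm a x v ax; rewrite /vnorm -/y -/f.
rewrite (dbar_dbar_sqrt (derivable_lapse ax It) (lapse_neq0 x It) f_near
  (is_derive_dt_metric v It Uy)).
rewrite (dbar_val N x (is_derive_sqrt_comp ft_gt0 dft)) dbar_dbar_quad // /dbar2_quad_chart.
rewrite /sff quadZ psi_phi // -/y.
have fS : quad (g a t y) v = Num.sqrt (f t) ^+ 2 by rewrite sqr_sqrtr // ltW.
rewrite fS.
set n := N t x; set n' := dt_N N t x; set Q1 := quad (dt_g g a t y) v.
set Q2 := quad (dtt_g g a t y) v; set S := Num.sqrt (f t).
have n0 : n != 0 := lapse_neq0 x It.
have S0 : S != 0 by rewrite gt_eqF // sqrtr_gt0.
have -> : (2 * n ^+ 2)^-1 * (Q2 + 2 * (- (2 * n)^-1 * Q1) * n') =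
  n ^- 2 * (Q2 - n' * Q1 / n) / 2 by field.
have -> : (1 - q) * (- (2 * n)^-1 * Q1) ^+ 2 / S ^+ 2 =
  (1 - q) * (n^-1 * (Q1 / (2 * S))) ^+ 2.
  by field; rewrite n0 S0.
lra.
Qed.

Lemma energy_decelerating_of_nonpos t0 : I t0 ->
  (forall a x v, cdom a x ->
     quad (dtt_g g a t0 (phi a x) + 2 * dt_N N t0 x *: sff N g a t0 x) v <= 0) ->
  energy_decelerating N g t0.
Proof.
move=> It0 nonpos J sigma e _ _ e_def; apply: integral_le0 => s Js.
have [b bs] := charts_cover A (sigma s).
rewrite (e_def s b Js bs) /curve_sqspeed dbar_dbar_quad // dbar2_quad_chart_sff //.
by rewrite mulr_ge0_le0 ?nonpos // invr_ge0 exprn_ge0 // ltW // lapse_gt0.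
Qed.

Lemma curve_sqspeed_line a b v y s t : U a (s *: v + y) ->
  cdom b (psi a (s *: v + y)) -> I t ->
  curve_sqspeed g b (fun r => psi a (r *: v + y)) s t = quad (g a t (s *: v + y)) v.
Proof.
move=> Uz bz It; have [az phiz] := phi_psi Uz.
rewrite /curve_sqspeed (derive_along_line v y (fun z => phi b (psi a z))).
case: HL => _ _ _ _ [_ _ tensor_law].
by rewrite -[in RHS]phiz (tensor_law a b t _ v It az bz) phiz.
Qed.

Lemma smooth_curve_line a v y (J : set R) : open J -> (forall s, J s -> U a (s *: v + y)) ->
  smooth_curve A J (fun s => psi a (s *: v + y)).
Proof.
move=> oJ UJ; exists J; split => // s Js; exists a, J; split => //.
- exact: (phi_psi (UJ s Js)).1.
- by move=> _ [r Jr <-]; exact: (phi_psi (UJ r Jr)).1.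
apply: smooth_on_eq (smooth_on_line v y oJ) => r Jr.
exact/esym/(phi_psi (UJ r Jr)).2.
Qed.

Lemma dbar2_quad_chart_gt_near a v t y : I t -> U a y -> 0 < dbar2_quad_chart a v t y ->
  exists2 eps : R, 0 < eps & forall s, ball 0 eps s ->
    U a (s *: v + y) /\
    dbar2_quad_chart a v t y / 2 < dbar2_quad_chart a v t (s *: v + y).
Proof.
move=> It Uy c_gt0.
have line_cvg : (fun s : R => s *: v + y) @ 0 --> y.
  by have := @continuous_line R _ v y 0; rewrite /continuous_at scale0r add0r.
suff : \forall s \near 0, U a (s *: v + y) /\
    dbar2_quad_chart a v t y / 2 < dbar2_quad_chart a v t (s *: v + y).
  by move/nbhs_ballP => [eps eps_gt0 H]; exists eps.
have chart_cvg :
    dbar2_quad_chart a v t (s *: v + y) @[s --> 0] --> dbar2_quad_chart a v t y.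
  by apply: cvg_comp line_cvg _; exact: continuous_dbar2_quad_chart.
near=> s; split; near: s.
  by apply: line_cvg; apply: open_nbhs_nbhs; split; [exact: open_chart | exact: Uy].
by apply: (cvgr_gt _ chart_cvg); lra.
Unshelve. all: by end_near.
Qed.

Lemma nonpos_of_energy_decelerating t0 a x v : I t0 -> energy_decelerating N g t0 ->
  cdom a x -> quad (dtt_g g a t0 (phi a x) + 2 * dt_N N t0 x *: sff N g a t0 x) v <= 0.
Proof.
move=> It0 ED ax; rewrite leNgt; apply/negP => Q_gt0.
set y := phi a x; set c := dbar2_quad_chart a v t0 y.
have c_gt0 : 0 < c.
  by rewrite /c dbar2_quad_chart_sff // mulr_gt0 // invr_gt0 exprn_gt0 // lapse_gt0.
have [eps eps_gt0 ball_eps] := dbar2_quad_chart_gt_near It0 (chart_image ax) c_gt0.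
set sigma := fun s => psi a (s *: v + y).
pose E s := dbar2_quad_chart a v t0 (s *: v + y).
have E_def s b : ball 0 eps s -> cdom b (sigma s) ->
    E s = dbar N (sigma s) (dbar N (sigma s) (curve_sqspeed g b sigma s)) t0.
  move=> Bs bs; have [Uz _] := ball_eps s Bs; have [az phiz] := phi_psi Uz.
  transitivity
    (dbar N (sigma s) (dbar N (sigma s) (fun t => quad (g a t (phi a (sigma s))) v)) t0).
    by rewrite dbar_dbar_quad // phiz.
  apply: near_eq_dbar_dbar; apply: filterS (near_time It0) => t It.
  by rewrite phiz curve_sqspeed_line.
have J_itv : is_interval (ball (0 : R) eps).
  by rewrite ball_itv; exact: interval_is_interval.
have sigma_smooth := smooth_curve_line (ball_open 0 eps) (fun s Bs => (ball_eps s Bs).1).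
move: (ED _ sigma E J_itv sigma_smooth E_def); apply/negP; rewrite -ltNge.
apply: integral_ball_gt0 eps_gt0 _ (fun s Bs => ltW (ball_eps s Bs).2).
by rewrite divr_gt0.
Qed.

End Spacetime.

Theorem lemma3p1 (R : realType) (M : Type) (A : smooth_manifold3 R M)
  (I : set R) (N : R -> M -> R)
  (g : chart_idx A -> R -> 'rV[R]_3 -> 'M[R]_3) :
  lorentz_data I N g ->
  (* (1) *)
  (forall (t q : R), I t -> decel_admissible N g t q ->
   forall a x (v : 'rV[R]_3), cdom a x ->
     (2 * N t x ^+ 2)^-1 *
       (quad (dtt_g g a t (phi a x)) v
        + 2 * quad (sff N g a t x) v * dt_N N t x)
     <= (1 - q) * (quad (sff N g a t x) v) ^+ 2 / quad (g a t (phi a x)) v)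
  /\
  (* (2) *)
  (forall t0 : R, I t0 ->
     (energy_decelerating N g t0 <->
      forall a x (v : 'rV[R]_3), cdom a x ->
        quad (dtt_g g a t0 (phi a x) + 2 * dt_N N t0 x *: sff N g a t0 x) v <= 0)).
Proof.
move=> HL; split=> [t q It adm a x v ax | t0 It0].
  exact: (deceleration_bound HL v It adm ax).
split=> [ED a x v ax | nonpos].
  exact: (nonpos_of_energy_decelerating HL v It0 ED ax).
exact: (energy_decelerating_of_nonpos HL It0 nonpos).
Qed.
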